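(* Suppose $F$ is symmetric, i.e. $F(-i)=1-F(i)$ for all $i\in[-1/2,1/2]$, and let $R\in(0,1)$, $\beta=F(1/2-R)$. Then every receiver type $i\in[-1/2,1/2]$ accepts the recommendation (i.e. $U_i^B\ge U_i^0$ and $U_i^0\ge U_i^D$), and the value of the recommendation system is $V=\pi^B\Delta_O^B$.
   Context: Setting. Consumer types are $i\in[-1/2,1/2]$, distributed according to a continuous cumulative distribution function $F$ with full support on $[-1/2,1/2]$. A product has a quality vector $(Q_1,Q_2)\in\{0,1\}^2$; a type-$i$ consumer gets payoff $(1/2+i)Q_1+(1/2-i)Q_2$ from it. The versions $(1,1),(1,0),(0,1),(0,0)$ have prior probabilities $q_H,q_1,q_2,q_L$ respectively, all strictly positive and summing to $1$. One product carries a recommendation from a sender whose type is drawn from $F$ independently of the product; given a threshold $R\in(0,1)$, the sender gives a buy recommendation $B$ if her payoff from the product is at least $R$ and a don't-buy recommendation $D$ otherwise. Let $\phi_1(R)=1-F(R-1/2)$, $\phi_2(R)=F(1/2-R)$ (under symmetry both equal $\beta$), $\pi^B=q_H+q_1\phi_1(R)+q_2\phi_2(R)$ and $\pi^D=1-\pi^B$. Posteriors: $p^B_H=q_H/\pi^B$, $p^B_1=q_1\phi_1(R)/\pi^B$, $p^B_2=q_2\phi_2(R)/\pi^B$, $p^B_L=0$; $p^D_H=0$, $p^D_1=q_1(1-\phi_1(R))/\pi^D$, $p^D_2=q_2(1-\phi_2(R))/\pi^D$, $p^D_L=q_L/\pi^D$. For $r\in\{B,D\}$ let $U_i^r=p_H^r+(1/2+i)p_1^r+(1/2-i)p_2^r$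 and $U_i^0=q_H+(1/2+i)q_1+(1/2-i)q_2$. The objective effect of the buy recommendation is $\Delta_O^B=p_H^B-q_H+\frac{p_1^B-q_1}{2}+\frac{p_2^B-q_2}{2}$. The value of the recommendation system is $V=\pi^B\int_{-1/2}^{1/2}\max\{U_i^B-U_i^0,0\}\,dF(i)+\pi^D\int_{-1/2}^{1/2}\max\{U_i^D-U_i^0,0\}\,dF(i)$, the expected payoff gain of a receiver drawn from $F$ who optimally chooses between the recommended product and an unrecommended alternative. *)

From HB Require Import structures.
From mathcomp Require Import all_boot all_order all_algebra.
From mathcomp Require Import all_classical all_reals all_analysis.
Set Implicit Arguments. Unset Strict Implicit. Unset Printing Implicit Defensive.
Import Order.TTheory GRing.Theory Num.Theory.
Local Open Scope ring_scope.
Local Open Scope classical_set_scope.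

Section Model.
Variable (R : realType).
(* F : cdf of types; qH q1 q2 qL : priors; r : threshold *)
Variables (F : R -> R) (qH q1 q2 qL r : R).

Definition phi1 : R := 1 - F (r - 2^-1).
Definition phi2 : R := F (2^-1 - r).
Definition piB : R := qH + q1 * phi1 + q2 * phi2.
Definition piD : R := 1 - piB.

Definition pBH : R := qH / piB.
Definition pB1 : R := q1 * phi1 / piB.
Definition pB2 : R := q2 * phi2 / piB.
Definition pBL : R := 0.
Definition pDH : R := 0.
Definition pD1 : R := q1 * (1 - phi1) / piD.
Definition pD2 : R := q2 * (1 - phi2) / piD.
Definition pDL : R := qL / piD.

Definition UB (i : R) : R := pBH + (2^-1 + i) * pB1 + (2^-1 - i) * pB2.
Definition UD (i : R) : R := pDH + (2^-1 + i) * pD1 + (2^-1 - i) * pD2.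
Definition U0 (i : R) : R := qH + (2^-1 + i) * q1 + (2^-1 - i) * q2.

Definition DeltaOB : R := pBH - qH + (pB1 - q1) / 2 + (pB2 - q2) / 2.

(* value of the recommendation system; mu is the law of the receiver type
   (the probability measure on R with cdf F), integral = \int ... dF(i) *)
Definition Vvalue (mu : {measure set R -> \bar R}) : \bar R :=
  (piB%:E * \int[mu]_(i in `[(- 2^-1)%R : R, 2^-1%R]) (Num.max (UB i - U0 i) 0)%:E
   + piD%:E * \int[mu]_(i in `[(- 2^-1)%R : R, 2^-1%R]) (Num.max (UD i - U0 i) 0)%:E)%E.
End Model.

From Pilot Require Import Defs.
From HB Require Import structures.
From mathcomp Require Import all_boot all_order all_algebra.
From mathcomp Require Import all_classical all_reals all_analysis.
From mathcomp Require Import ring lra measurable_realfun.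
Import Order.TTheory GRing.Theory Num.Theory numFieldNormedType.Exports.
Local Open Scope ring_scope.
Local Open Scope classical_set_scope.

(** For a symmetric type distribution [phi1 = phi2 = beta].  Posteriors average
back to the prior ([piB U^B_i + piD U^D_i = U^0_i]), so the two gaps
[U^B_i - U^0_i] and [U^0_i - U^D_i] are one numerator [gain i] divided by [piB]
and by [piD]; after eliminating [qL], [gain i] is a combination with weights
[1/2 - i] and [1/2 + i] of two manifestly nonnegative terms.  Hence every type
accepts the recommendation and the don't-buy part of [V] vanishes.  The
remaining integrand [U^B_i - U^0_i] is affine in [i] with value [Delta_O^B] at
[i = 0], and a continuous symmetric cdf makes the law of the types invariant
under [i |-> -i], so the linear part integrates to zero. *)

Section CdfMeasure.
Context {R : realType} {mu : probability R R} {F : R -> R}.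
Hypothesis cdfF : forall x, mu `]-oo, x] = (F x)%:E.

Lemma cdf_fun_ge0 x : 0 <= F x.
Proof. by rewrite -lee_fin -cdfF; exact: measure_ge0. Qed.

Lemma cdf_fun_le1 x : F x <= 1.
Proof. by rewrite -lee_fin -cdfF; exact: probability_le1. Qed.

Lemma cdf_fun_le x y : x <= y -> F x <= F y.
Proof.
move=> xy; rewrite -lee_fin -!cdfF; apply: le_measure; rewrite ?inE//.
by apply: subset_itvl; rewrite bnd_simp.
Qed.

Lemma cdf_fun_oddE a : F (- a) = 0 -> F a = 1 ->
  (forall x, - a <= x <= a -> F (- x) = 1 - F x) ->
  forall x, F (- x) = 1 - F x.
Proof.
move=> Fa0 Fa1 Fodd x; have [xa|] := boolP (- a <= x <= a); first exact: Fodd.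
rewrite negb_and -!ltNge => /orP[xa|ax].
- have -> : F x = 0 by apply/le_anti; rewrite cdf_fun_ge0 -Fa0 cdf_fun_le// ltW.
  by apply/le_anti; rewrite subr0 cdf_fun_le1 -Fa1 cdf_fun_le// lerNr ltW.
- have -> : F x = 1 by apply/le_anti; rewrite cdf_fun_le1 -Fa1 cdf_fun_le// ltW.
  by apply/le_anti; rewrite subrr cdf_fun_ge0 -Fa0 cdf_fun_le// lerN2 ltW.
Qed.

Lemma measure_itv_oc a b : a <= b -> mu `]a, b] = (F b - F a)%:E.
Proof.
move=> ab; have -> : `]a, b] = `]-oo, b] `\` `]-oo, a] :> set R.
  by rewrite -[RHS]setCK setCD setCitvl setUC -[LHS]setCK setCitv.
rewrite measureD//; last by rewrite -ge0_fin_numE// fin_num_measure.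
rewrite setIidr; last by apply: subset_itvl; rewrite bnd_simp.
by rewrite EFinB -!cdfF.
Qed.

Hypothesis contF : continuous F.

Lemma measure_itvNy_o x : mu `]-oo, x[ = (F x)%:E.
Proof.
have fin : mu `]-oo, x[ \is a fin_num by rewrite fin_num_measure.
rewrite -(fineK fin); congr EFin; apply/le_anti/andP; split.
  rewrite -lee_fin fineK// -cdfF; apply: le_measure; rewrite ?inE//.
  by apply: subset_itvl; rewrite bnd_simp.
apply/ler_addgt0Pr => e e0.
have /cvgrPdist_lt/(_ e e0)/nbhs_ballP[d /= d0 Fnear] := contF x.
have xd : ball x d (x - d / 2).
  rewrite /ball /= opprB addrC subrK ger0_norm ?divr_ge0 ?ltW//.
  by rewrite ltr_pdivrMr// ltr_pMr// ltr1n.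
have Fxd : F (x - d / 2) <= fine (mu `]-oo, x[).
  rewrite -lee_fin fineK// -cdfF; apply: le_measure; rewrite ?inE//.
  by apply: subset_itvl; rewrite bnd_simp ltrBlDr ltrDl divr_gt0.
by move: (Fnear _ xd); rewrite ltr_norml; lra.
Qed.

Lemma measure_itv_co a b : a <= b -> mu `[a, b[ = (F b - F a)%:E.
Proof.
move=> ab; have -> : `[a, b[ = `]-oo, b[ `\` `]-oo, a[ :> set R.
  by rewrite -[RHS]setCK setCD setCitvl setUC -[LHS]setCK setCitv.
rewrite measureD//; last by rewrite -ge0_fin_numE// fin_num_measure.
rewrite setIidr; last by apply: subset_itvl; rewrite bnd_simp.
by rewrite EFinB -!measure_itvNy_o.
Qed.

Lemma measure_itv_cc a b : a <= b -> mu `[a, b] = (F b - F a)%:E.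
Proof.
move=> ab; have -> : `[a, b] = `]-oo, b] `\` `]-oo, a[ :> set R.
  by rewrite -[RHS]setCK setCD setCitvl setUC -[LHS]setCK setCitv.
rewrite measureD//; last by rewrite -ge0_fin_numE// fin_num_measure.
rewrite setIidr; last by apply: subset_itvl; rewrite bnd_simp.
by rewrite EFinB -cdfF -measure_itvNy_o.
Qed.

Hypothesis Fodd : forall x, F (- x) = 1 - F x.

(** Both measures agree on the pi-system of intervals [`]a, b]], whose preimage
under negation is [`[-b, -a[]. *)
Lemma measure_oppr_preimage (A : set R) : measurable A -> mu (-%R @^-1` A) = mu A.
Proof.
have mopp : measurable_fun setT (-%R : R -> R) by exact: oppr_measurable.
pose nu : {measure set R -> \bar R} := pushforward mu (-%R : R -> R).
pose g k : set R := `](- k%:R), k%:R].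
move=> mA; apply/esym.
apply: (measure_unique (@ocitv R) g _ (@ocitvI R) _ _ mu (nu mopp)) => //.
- by move=> k; exact: is_ocitv.
- apply/seteqP; split => // x _; exists (Num.bound x) => //.
  by rewrite /g /= in_itv/= ltrNl unstable.ltrNbound ltW ?unstable.ltr_bound.
- move=> X /ocitvP[->|[[a b] /= ab ->]].
    by rewrite /nu /= /pushforward preimage_set0 !measure0.
  rewrite /nu /= /pushforward opp_preimage_itvbndbnd /= measure_itv_oc ?ltW//.
  by rewrite measure_itv_co ?lerN2 ?ltW// !Fodd; congr EFin; ring.
- by move=> k; rewrite /g (le_lt_trans (probability_le1 _ _)) ?ltry.
Qed.

End CdfMeasure.

Section SymmetricIntegral.
Context {R : realType} (mu : probability R R) (a : R).
Hypothesis mu_oppr : forall A : set R, measurable A -> mu (-%R @^-1` A) = mu A.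
Let D : set R := `[- a, a].

Lemma ge0_integral_oppr (g : R -> \bar R) :
  measurable_fun D g -> {in D, forall x, (0 <= g x)%E} ->
  (\int[mu]_(x in D) g x = \int[mu]_(x in D) g (- x)%R)%E.
Proof.
move=> mg g0; have mopp : measurable_fun setT (-%R : R -> R).
  exact: oppr_measurable.
pose nu : {measure set R -> \bar R} := pushforward mu (-%R : R -> R).
transitivity (\int[nu mopp]_(x in D) g x)%E.
  by apply: eq_measure_integral => A mA _; rewrite /nu /= /pushforward mu_oppr.
by rewrite /D ge0_integral_pushforward// opp_preimage_itvbndbnd /= opprK.
Qed.

Lemma integral_affine_symmetric (b c : R) :
  {in D, forall x, 0 <= b + c * x} ->
  (\int[mu]_(x in D) (b + c * x)%:E = b%:E * mu D)%E.
Proof.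
move=> f0; set I := (\int[mu]_(x in D) _)%E.
have mD : measurable D by rewrite /D.
have maff (c' : R) : measurable_fun D (fun x => (b + c' * x)%:E).
  by apply/measurable_EFinP; apply: measurable_funD => //; exact: measurable_funM.
have xDN x : x \in D -> - x \in D.
  by rewrite /D !in_setE /= !in_itv /= => /andP[? ?]; apply/andP; split; lra.
have fN0 x : x \in D -> 0 <= b + (- c) * x.
  by move/xDN/f0; rewrite mulrN -mulNr.
have I_oppr : I = (\int[mu]_(x in D) (b + (- c) * x)%:E)%E.
  rewrite /I ge0_integral_oppr => [|//|x /f0]; last by rewrite lee_fin.
  by apply: eq_integral => x _; rewrite mulrN mulNr.
have fin : mu D \is a fin_num by rewrite fin_num_measure.
have II : (I + I = (b + b)%:E * mu D)%E.
  rewrite {2}I_oppr -ge0_integralD// => [|x /mem_set/f0|x /mem_set/fN0].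
  - rewrite -integral_cst//; apply: eq_integral => x _.
    by rewrite -EFinD; congr EFin; ring.
  - by rewrite lee_fin.
  - by rewrite lee_fin.
move: II {I_oppr}; rewrite -(fineK fin) -EFinM.
by case: I => [x||] //= [xE]; congr EFin; lra.
Qed.

End SymmetricIntegral.

Section Recommendation.
Context {R : realType} {F : R -> R} {qH q1 q2 qL r : R}.

Local Notation piB := (piB F qH q1 q2 r).
Local Notation piD := (piD F qH q1 q2 r).
Local Notation beta := (phi2 F r).

Lemma UB_sub_U0_affine i :
  UB F qH q1 q2 r i - U0 qH q1 q2 i =
  DeltaOB F qH q1 q2 r +
    (pB1 F qH q1 q2 r - q1 - (pB2 F qH q1 q2 r - q2)) * i.
Proof. by rewrite /UB /U0 /DeltaOB; ring. Qed.

Hypotheses (qH_gt0 : 0 < qH) (q1_gt0 : 0 < q1) (q2_gt0 : 0 < q2).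
Hypotheses (qL_gt0 : 0 < qL) (q_sum : qH + q1 + q2 + qL = 1).
Hypotheses (phi12 : phi1 F r = beta) (beta_gt0 : 0 < beta) (beta_lt1 : beta < 1).

Definition gain i :=
  qH * piD + (2^-1 + i) * q1 * (beta - piB) + (2^-1 - i) * q2 * (beta - piB).

Lemma piBE : piB = qH + (q1 + q2) * beta.
Proof. by rewrite /Defs.piB phi12; ring. Qed.

Lemma piB_gt0 : 0 < piB.
Proof.
by rewrite piBE ltr_wpDr// mulr_ge0// ltW// addr_gt0.
Qed.

Lemma piD_gt0 : 0 < piD.
Proof.
rewrite /Defs.piD piBE subr_gt0.
have : (q1 + q2) * beta < q1 + q2 by rewrite gtr_pMr// addr_gt0.
by move: q_sum qL_gt0; lra.
Qed.

Lemma gain_ge0 i : - 2^-1 <= i <= 2^-1 -> 0 <= gain i.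
Proof.
move=> /andP[iN ip].
have -> : gain i =
    (2^-1 - i) * (q1 * qH * (1 - beta) + qL * (qH + q2 * beta)) +
    (2^-1 + i) * (q2 * qH * (1 - beta) + qL * (qH + q1 * beta)).
  have qLE : qL = 1 - qH - q1 - q2 by rewrite -q_sum; ring.
  by rewrite /gain /Defs.piD piBE qLE; field.
have pos x y : 0 < x -> 0 < y ->
    0 <= x * qH * (1 - beta) + qL * (qH + y * beta).
  move=> x0 y0; apply: addr_ge0; apply: mulr_ge0; rewrite ?mulr_ge0 ?subr_ge0 ?ltW//.
  by rewrite ltr_wpDr ?mulr_ge0 ?ltW.
by rewrite addr_ge0 ?mulr_ge0 ?pos//; lra.
Qed.

Lemma UB_sub_U0 i : UB F qH q1 q2 r i - U0 qH q1 q2 i = gain i / piB.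
Proof.
have := piB_gt0; rewrite /UB /U0 /gain /pBH /pB1 /pB2 /Defs.piD phi12 => ?.
by field; lra.
Qed.

Lemma U0_sub_UD i : U0 qH q1 q2 i - UD F qH q1 q2 r i = gain i / piD.
Proof.
have := piD_gt0; rewrite /UD /U0 /gain /pDH /pD1 /pD2 /Defs.piD phi12 => ?.
by field; lra.
Qed.

Lemma U0_le_UB i : - 2^-1 <= i <= 2^-1 -> U0 qH q1 q2 i <= UB F qH q1 q2 r i.
Proof.
by move=> /gain_ge0 ?; rewrite -subr_ge0 UB_sub_U0 divr_ge0 ?(ltW piB_gt0).
Qed.

Lemma UD_le_U0 i : - 2^-1 <= i <= 2^-1 -> UD F qH q1 q2 r i <= U0 qH q1 q2 i.
Proof.
by move=> /gain_ge0 ?; rewrite -subr_ge0 U0_sub_UD divr_ge0 ?(ltW piD_gt0).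
Qed.

End Recommendation.

Theorem proposition4 (R : realType) (F : R -> R) (mu : probability R R)
  (qH q1 q2 qL r : R) :
  (* F is a continuous cdf with full support on [-1/2,1/2] *)
  continuous F ->
  F (- 2^-1) = 0 -> F (2^-1) = 1 ->
  {in `[(- 2^-1), 2^-1] &, forall x y, x < y -> F x < F y} ->
  (* mu is the distribution of types: its cdf is F *)
  (forall x : R, mu `]-oo, x] = (F x)%:E) ->
  (* priors *)
  0 < qH -> 0 < q1 -> 0 < q2 -> 0 < qL -> qH + q1 + q2 + qL = 1 ->
  (* threshold *)
  0 < r < 1 ->
  (* symmetry of F *)
  (forall i, - 2^-1 <= i <= 2^-1 -> F (- i) = 1 - F i) ->
  (forall i, - 2^-1 <= i <= 2^-1 ->
     U0 qH q1 q2 i <= UB F qH q1 q2 r i /\ UD F qH q1 q2 r i <= U0 qH q1 q2 i) /\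
  Vvalue F qH q1 q2 r mu = (piB F qH q1 q2 r * DeltaOB F qH q1 q2 r)%:E.
Proof.
move=> contF F0 F1 Fmono cdfF qH0 q10 q20 qL0 qsum /andP[r0 r1] Fodd.
have inD x : x \in (`[- 2^-1, 2^-1] : set R) -> - 2^-1 <= x <= 2^-1.
  by rewrite in_setE /= in_itv.
have phi12 : phi1 F r = phi2 F r.
  by rewrite /phi1 /phi2 -(opprB r) Fodd//; lra.
have beta_gt0 : 0 < phi2 F r.
  by rewrite -F0; apply: Fmono; rewrite ?in_setE /= ?in_itv /=; lra.
have beta_lt1 : phi2 F r < 1.
  by rewrite -F1; apply: Fmono; rewrite ?in_setE /= ?in_itv /=; lra.
have UB_ge := U0_le_UB qH0 q10 q20 qL0 qsum phi12 beta_gt0 beta_lt1.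
have UD_le := UD_le_U0 qH0 q10 q20 qL0 qsum phi12 beta_gt0 beta_lt1.
split=> [i iD|]; first by split; [apply: UB_ge | apply: UD_le].
have no_gain_D : (\int[mu]_(i in `[(- 2^-1)%R, 2^-1%R])
    (Num.max (UD F qH q1 q2 r i - U0 qH q1 q2 i) 0)%:E = 0)%E.
  rewrite (eq_integral (fun=> 0%E)) ?integral0// => i /inD iD.
  by rewrite max_r// subr_le0 UD_le.
rewrite /Vvalue no_gain_D mule0 adde0 EFinM; congr (_ * _)%E.
rewrite (eq_integral (fun i => (DeltaOB F qH q1 q2 r +
    (pB1 F qH q1 q2 r - q1 - (pB2 F qH q1 q2 r - q2)) * i)%:E)) => [|i /inD iD].
  rewrite integral_affine_symmetric => [|A mA|i /inD iD].
  - by rewrite (measure_itv_cc cdfF contF) ?F0 ?F1 ?subr0 ?mule1//; lra.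
  - exact: measure_oppr_preimage cdfF contF (cdf_fun_oddE cdfF _ F0 F1 Fodd) A mA.
  - by rewrite -UB_sub_U0_affine subr_ge0 UB_ge.
by rewrite max_l -?UB_sub_U0_affine// subr_ge0 UB_ge.
Qed.
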